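(* Let $\Omega\subset\mathbb{R}^2$ be a convex region and $P$ a set of $n$ points on its boundary $\partial\Omega$, and let $G'(P)$ be the weighted directed graph constructed from $P$ as described in the context. Then for each pair of points $p_i,p_j\in P$ with $p_i\uparrow p_j$, there exists a directed path in $G'(P)$ from the vertex $p_i$ to the vertex $p_j$ whose cost equals $|p_ip_j|_1$, the $L_1$-length of the segment $p_ip_j$. Furthermore, $G'(P)$ has $\mathcal{O}(n\log n)$ vertices and edges.
   Context: For points $p,q$ write $p\uparrow q$ if the segment $pq$ is $xy$-monotone from $p$ to $q$, i.e. $q$ has $x$- and $y$-coordinates at least those of $p$. Construction of $G'(P)$: its vertex set is initialized to $P$. Take a vertical median line $m$ splitting $P$ into at least $\lfloor |P|/2-1\rfloor$ points on each side. Let $m_1$ (resp. $m_2$) be the upper (resp. lower) intersection point of $m$ with $\partial\Omega$, added as Steiner vertices, and let $\ell_1,\ell_2$ be the horizontal lines through $m_1,m_2$. Let $P_{above}$ be the points of $P$ above $\ell_1$, $P_{below}$ those below $\ell_2$, and $P_{middle}$ the rest. For each $p\in P_{middle}$ add its orthogonal projection $p^m$ onto $m$ as a Steiner vertex and the edge between $p$ and $p^m$, directed in $xy$-monotone order. Sorting $P_{middle}=\langle p_1,\dots,p_k\rangle$ by increasing $y$-coordinate, add edges $(p_i^m,p_{i+1}^m)$ for $i=1,\dots,k-1$, and edges $(m_2,p_1^m)$ and $(p_k^m,m_1)$. For each $p\in P_{above}$ add edge $(m_1,p)$ and for each $p\in P_{below}$ add edge $(p,m_2)$. Each edge has weight equal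 to its $L_1$-length. Then recurse on the points of $P$ to the left of $m$ and on those to the right of $m$. The cost of a path is the sum of its edge weights. *)

From HB Require Import structures.
From mathcomp Require Import all_boot all_order all_algebra.
From mathcomp Require Import all_classical all_reals all_analysis.
Set Implicit Arguments. Unset Strict Implicit. Unset Printing Implicit Defensive.
Import Order.TTheory GRing.Theory Num.Theory numFieldNormedType.Exports.
Local Open Scope ring_scope.
Local Open Scope classical_set_scope.

Section Defs.
Variable R : realType.
Notation point := (R * R)%type.

Definition d1 (p q : point) : R := `|q.1 - p.1| + `|q.2 - p.2|.

(* p "up" q : segment pq is xy-monotone from p to q *)
Definition up (p q : point) : bool := (p.1 <= q.1) && (p.2 <= q.2).

Definition bd (O : set point) : set point := closure O `\` interior O.

Definition convex_pl (O : set point) : Prop :=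
  forall p q (t : R), O p -> O q -> 0 <= t <= 1 ->
    O (t * p.1 + (1 - t) * q.1, t * p.2 + (1 - t) * q.2).

Definition convex_region (O : set point) : Prop :=
  [/\ convex_pl O, compact O & interior O !=set0].

Definition orient (u v : point) : point * point := if up u v then (u, v) else (v, u).

Definition consec (l : seq point) : seq (point * point) := zip l (behead l).

Definition leftof (c : R) (P : seq point) := [seq p : point <- P | p.1 < c].
Definition rightof (c : R) (P : seq point) := [seq p : point <- P | c < p.1].

(* G'(P) Ω P V E : (V, E) (vertex list, directed edge list) is a graph G'(P)
   obtained by the recursive construction of the paper (for some choice of
   median lines).  Edge weights are L1 lengths, see [pcost]. *)
Inductive Gprime (O : set point) : seq point -> seq point -> seq (point * point) -> Prop :=
| Gprime_base (P : seq point) : (size P <= 1)%N -> Gprime O P P [::]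
| Gprime_step (P : seq point) (c : R) (m1 m2 : point) (s : seq point)
      (VL VR : seq point) (EL ER : seq (point * point)) :
    (2 <= size P)%N ->
    (* median vertical line m : x = c *)
    (size (leftof c P) <= (size P)./2)%N ->
    (size (rightof c P) <= (size P)./2)%N ->
    bd O m1 -> m1.1 = c -> (forall z, bd O z -> z.1 = c -> z.2 <= m1.2) ->
    bd O m2 -> m2.1 = c -> (forall z, bd O z -> z.1 = c -> m2.2 <= z.2) ->
    perm_eq s [seq p : point <- P | (m2.2 <= p.2) && (p.2 <= m1.2)] ->
    sorted (fun a b : point => a.2 <= b.2) s ->
    Gprime O (leftof c P) VL EL ->
    Gprime O (rightof c P) VR ER ->
    Gprime O P
      (P ++ [:: m1; m2] ++ [seq (c, p.2) | p : point <- s] ++ VL ++ VR)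
      ([seq orient p (c, p.2) | p : point <- s]
       ++ consec (m2 :: rcons [seq (c, p.2) | p : point <- s] m1)
       ++ [seq (m1, p) | p : point <- P & m1.2 < p.2]
       ++ [seq (p, m2) | p : point <- P & p.2 < m2.2]
       ++ EL ++ ER).

(* a directed path from p along w (p :: w is the vertex sequence) in edge set E *)
Definition is_dpath (E : seq (point * point)) (p : point) (w : seq point) : bool :=
  path (fun u v => (u, v) \in E) p w.

Fixpoint pcost (p : point) (w : seq point) : R :=
  if w is v :: w' then d1 p v + pcost v w' else 0.

End Defs.

From HB Require Import structures.
From mathcomp Require Import all_boot all_order all_algebra.
From mathcomp Require Import all_classical all_reals all_analysis.
From mathcomp Require Import ring lra zify.
Set Implicit Arguments. Unset Strict Implicit. Unset Printing Implicit Defensive.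
Import Order.TTheory GRing.Theory Num.Theory numFieldNormedType.Exports.
Local Open Scope ring_scope.
Local Open Scope classical_set_scope.

(* A pair p_i, p_j on one side of the median line x = c is handled by
   recursion.  If the pair straddles the line, the segment p_i p_j meets the
   line inside the convex region, so p_i lies below the top boundary point m1
   and p_j above the bottom point m2.  Hence p_i has a monotone edge to the
   vertical chain of Steiner points on the line (to its projection, or to m2),
   the chain climbs to the height of p_j (or to m1), and a monotone edge leads
   to p_j; along a monotone path the L1 costs add up to |p_i p_j|_1.  Each
   level of the recursion adds O(n) vertices and edges and there are O(log n)
   levels. *)

Section Plane.
Variable R : realType.
Notation point := (R * R)%type.

Lemma compact_snd_bounded (O : set point) :
  compact O -> exists M, forall p, O p -> `|p.2| <= M.
Proof.
move=> /compact_bounded [M [_ HM]]; exists (M + 1) => p Op.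
have := HM (M + 1); rewrite ltrDl ltr01 => /(_ isT p Op) /=.
by rewrite prod_normE; apply: le_trans; rewrite le_max lexx orbT.
Qed.

Lemma bd_sub (O : set point) : closed O -> bd O `<=` O.
Proof. by move=> /closure_id {2}-> p []. Qed.

(* With d = 1 (resp. -1) this gives the top (resp. bottom) end of the
   vertical section of O through z, obtained as the supremum of the section. *)
Lemma vertical_bd_point (O : set point) (d : R) : compact O -> `|d| = 1 ->
  forall z, O z -> exists2 w, bd O w & w.1 = z.1 /\ d * z.2 <= d * w.2.
Proof.
move=> cO nd z Oz.
have dd : d * d = 1 by rewrite -expr2 -real_normK ?num_real // nd expr1n.
have [M HM] := compact_snd_bounded cO.
pose K := [set t | O (z.1, d * t)].
have Kz : K (d * z.2) by rewrite /K /= mulrA dd mul1r -surjective_pairing.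
have supK : has_sup K.
  split; first by exists (d * z.2).
  exists M => t /HM /=; rewrite normrM nd mul1r; apply: le_trans; exact: ler_norm.
pose s := sup K.
have ub_s := ub_le_sup supK.2.
have ball_s t e : `|s - t| < e -> ball (z.1, d * s) e (z.1, d * t).
  move=> he; split => /=; first by apply: ballxx; apply: le_lt_trans he.
  by rewrite /ball /= -mulrBr normrM nd mul1r.
exists (z.1, d * s); last by split => //=; rewrite mulrA dd mul1r; exact: ub_s.
split.
  move=> B /nbhs_ballP [e e0 HB].
  have [t Kt lt_t] := sup_adherent e0 supK.
  exists (z.1, d * t); split => //; apply/HB/ball_s.
  by rewrite ger0_norm ?subr_ge0 ?ub_s // ltrBlDr addrC -ltrBlDr.
move=> /nbhs_ballP [e e0 HB].
have /ub_s : K (s + e / 2).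
  apply/HB/ball_s; rewrite opprD addrA subrr sub0r normrN ger0_norm.
    by rewrite ltr_pdivrMr // ltr_pMr // ltr1n.
  by rewrite divr_ge0 // ltW.
by rewrite -/s -lerBrDl subrr leNgt divr_gt0.
Qed.

Lemma bd_above (O : set point) z : compact O -> O z ->
  exists2 w, bd O w & w.1 = z.1 /\ z.2 <= w.2.
Proof.
move=> cO /(vertical_bd_point cO (normr1 R)) [w bw [w1 w2]].
by exists w; rewrite // -[z.2]mul1r -[w.2]mul1r.
Qed.

Lemma bd_below (O : set point) z : compact O -> O z ->
  exists2 w, bd O w & w.1 = z.1 /\ w.2 <= z.2.
Proof.
move=> cO /(vertical_bd_point cO (normrN1 R)) [w bw [w1 w2]].
by exists w; rewrite // -lerN2 -mulN1r -[- w.2]mulN1r.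
Qed.

Lemma convex_vertical_crossing (O : set point) pi pj c : convex_pl O ->
  O pi -> O pj -> pi.1 <= c <= pj.1 -> pi.2 <= pj.2 ->
  exists z, [/\ O z, z.1 = c & pi.2 <= z.2 <= pj.2].
Proof.
move=> cvO Oi Oj /andP [ic cj] le_ij.
have [e_ij|ne_ij] := eqVneq pi.1 pj.1.
  by exists pi; rewrite lexx le_ij; split => //; apply/eqP; rewrite eq_le ic e_ij cj.
have d_gt0 : 0 < pj.1 - pi.1 by rewrite subr_gt0 lt_neqAle ne_ij (le_trans ic cj).
pose t := (pj.1 - c) / (pj.1 - pi.1).
have t_ge0 : 0 <= t by rewrite divr_ge0 ?(ltW d_gt0) // subr_ge0.
have t_le1 : t <= 1 by rewrite ler_pdivrMr // mul1r lerB.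
exists (t * pi.1 + (1 - t) * pj.1, t * pi.2 + (1 - t) * pj.2); split => /=.
- by apply: cvO => //; rewrite t_ge0 t_le1.
- by rewrite /t; field; rewrite subr_eq0 eq_sym.
- have : 0 <= t * (pj.2 - pi.2) by rewrite mulr_ge0 // subr_ge0.
  have : 0 <= (1 - t) * (pj.2 - pi.2) by rewrite mulr_ge0 // subr_ge0.
  move=> h1 h2; apply/andP; split; lra.
Qed.

(* The segment pi pj crosses x = c inside O, and the vertical section of O
   through the crossing point reaches the boundary above and below it. *)
Lemma straddle_bd_bounds (O : set point) pi pj c (m1 m2 : point) :
  convex_region O -> bd O pi -> bd O pj ->
  pi.1 <= c <= pj.1 -> pi.2 <= pj.2 ->
  (forall z, bd O z -> z.1 = c -> z.2 <= m1.2) ->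
  (forall z, bd O z -> z.1 = c -> m2.2 <= z.2) ->
  pi.2 <= m1.2 /\ m2.2 <= pj.2.
Proof.
move=> [cvO cO _] bi bj hc le_ij top bot.
have bdO := bd_sub (compact_closed (@norm_hausdorff _ _) cO).
have [z [Oz zc /andP [iz zj]]] :=
  convex_vertical_crossing cvO (bdO _ bi) (bdO _ bj) hc le_ij.
have [w1 bw1 [w11 zw1]] := bd_above cO Oz.
have [w2 bw2 [w21 w2z]] := bd_below cO Oz.
have := top w1 bw1 (etrans w11 zc); have := bot w2 bw2 (etrans w21 zc).
split; lra.
Qed.

Definition le_y (a b : point) := a.2 <= b.2.

Lemma le_y_trans : transitive le_y.
Proof. by move=> ? ? ?; apply: le_trans. Qed.

Lemma d1_up (p q : point) : up p q -> d1 p q = (q.1 - p.1) + (q.2 - p.2).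
Proof. by case/andP=> h1 h2; rewrite /d1 !ger0_norm ?subr_ge0. Qed.

Lemma orient_down (p q : point) : up q p -> orient p q = (q, p).
Proof.
rewrite /orient => /andP [h1 h2]; case: ifP => // /andP [h1' h2'].
suff -> : p = q by [].
by rewrite [p]surjective_pairing [q]surjective_pairing; congr pair; apply/le_anti/andP.
Qed.

Lemma pcost_cat (p : point) w1 w2 :
  pcost p (w1 ++ w2) = pcost p w1 + pcost (last p w1) w2.
Proof. by elim: w1 p => [|v w IH] p /=; rewrite ?add0r // IH addrA. Qed.

Lemma consec_catr (l1 l2 : seq point) : {subset consec l2 <= consec (l1 ++ l2)}.
Proof.
elim: l1 => [|a l1 IH] //= x /IH; rewrite /consec /=.
by case: (l1 ++ l2) => [|b l] //= h; rewrite in_cons h orbT.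
Qed.

Lemma vertical_chain_path_head c (a : point) t v :
  {in a :: t, forall x, x.1 = c} -> pairwise le_y (a :: t) -> v \in a :: t ->
  exists w, [/\ is_dpath (consec (a :: t)) a w, last a w = v & pcost a w = v.2 - a.2].
Proof.
elim: t a => [|b t IH] a onc srt.
  by rewrite inE => /eqP ->; exists [::]; rewrite /= subrr.
rewrite in_cons => /predU1P [->|vt]; first by exists [::]; rewrite /= subrr.
move: srt; rewrite pairwise_cons => /andP [/allP a_le srt].
have [|w [pw lw cw]] := IH b _ srt vt.
  by move=> x xt; apply: onc; rewrite in_cons xt orbT.
exists (b :: w); split => //=.
  rewrite /consec /= in_cons eqxx /=.
  by apply: sub_path pw => x y xy; rewrite in_cons xy orbT.
have ab : le_y a b by apply: a_le; rewrite mem_head.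
rewrite cw /d1 (onc a) ?mem_head // (onc b) ?inE ?eqxx ?orbT //.
rewrite subrr normr0 add0r ger0_norm ?subr_ge0 //; lra.
Qed.

Lemma vertical_chain_path c (ch : seq point) u v :
  {in ch, forall x, x.1 = c} -> pairwise le_y ch -> u \in ch -> v \in ch ->
  u.2 <= v.2 ->
  exists w, [/\ is_dpath (consec ch) u w, last u w = v & pcost u w = v.2 - u.2].
Proof.
move=> onc srt /splitPr u_ch; case: u_ch onc srt => l1 l2 onc srt v_ch uv.
move: srt; rewrite pairwise_cat => /and3P [/allrelP l1_le _ srt].
have v_tail : v \in u :: l2.
  move: v_ch; rewrite mem_cat => /orP [v_l1|//].
  have vu : v.2 = u.2 by apply/le_anti; rewrite uv andbT; exact: l1_le (mem_head _ _).
  have vu1 : v.1 = u.1 by rewrite !onc ?mem_cat ?v_l1 ?mem_head ?orbT.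
  by rewrite [v]surjective_pairing vu1 vu -surjective_pairing mem_head.
have [|w [pw lw cw]] := vertical_chain_path_head (c := c) _ srt v_tail.
  by move=> x xl2; apply: onc; rewrite mem_cat xl2 orbT.
by exists w; split => //; apply: sub_path pw => x y; apply: consec_catr.
Qed.

Section Spine.
Variables (P s : seq point) (c : R) (m1 m2 : point).
Hypotheses (m1c : m1.1 = c) (m2c : m2.1 = c) (m21 : m2.2 <= m1.2).
Hypothesis s_middle :
  perm_eq s [seq p : point <- P | (m2.2 <= p.2) && (p.2 <= m1.2)].
Hypothesis s_sorted : sorted (fun a b : point => a.2 <= b.2) s.

Definition spine := m2 :: rcons [seq (c, p.2) | p : point <- s] m1.

Definition spine_edges :=
  [seq orient p (c, p.2) | p : point <- s] ++ consec spine
  ++ [seq (m1, p) | p : point <- P & m1.2 < p.2]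
  ++ [seq (p, m2) | p : point <- P & p.2 < m2.2].

Lemma mem_middle p : p \in s = (p \in P) && (m2.2 <= p.2 <= m1.2).
Proof. by rewrite (perm_mem s_middle) mem_filter andbC. Qed.

Lemma proj_mem_spine p : p \in s -> (c, p.2) \in spine.
Proof. by move=> ps; rewrite in_cons mem_rcons in_cons map_f ?orbT. Qed.

Lemma spine_on_line : {in spine, forall x, x.1 = c}.
Proof.
by move=> x; rewrite in_cons mem_rcons in_cons => /or3P [/eqP->|/eqP->|/mapP [p _ ->]].
Qed.

Lemma spine_sorted : pairwise le_y spine.
Proof.
have s_bnd p : p \in s -> m2.2 <= p.2 <= m1.2 by rewrite mem_middle => /andP [].
rewrite pairwise_cons -cats1 pairwise_cat; apply/and4P; split.
- apply/allP => x; rewrite mem_cat inE.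
  by case/orP => [/mapP [p /s_bnd /andP [m2p _] ->]|/eqP ->]; [exact: m2p|exact: m21].
- apply/allrelP => x y /mapP [p /s_bnd /andP [_ pm1] ->].
  by rewrite inE => /eqP ->; exact: pm1.
- by rewrite pairwise_map -(sorted_pairwise le_y_trans).
- by [].
Qed.

Lemma spine_entry pi : pi \in P -> pi.1 <= c -> pi.2 <= m1.2 ->
  exists2 u, (pi, u) \in spine_edges &
    [/\ u \in spine, up pi u & u.2 = Num.max pi.2 m2.2].
Proof.
move=> Pi ic im1; have [lt_i2|le_2i] := ltP pi.2 m2.2.
  exists m2; first by rewrite !mem_cat map_f ?orbT // mem_filter lt_i2.
  by rewrite mem_head /up m2c ic (ltW lt_i2).
exists (c, pi.2); last by rewrite proj_mem_spine ?mem_middle ?Pi ?le_2i // /up ic lexx.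
have -> : (pi, (c, pi.2)) = orient pi (c, pi.2) by rewrite /orient /up ic lexx.
by rewrite mem_cat; apply/orP; left; apply/mapP; exists pi; rewrite // mem_middle Pi le_2i.
Qed.

Lemma spine_exit pj : pj \in P -> c <= pj.1 -> m2.2 <= pj.2 ->
  exists2 v, (v, pj) \in spine_edges &
    [/\ v \in spine, up v pj & v.2 = Num.min pj.2 m1.2].
Proof.
move=> Pj cj m2j; have [lt_1j|le_j1] := ltP m1.2 pj.2.
  exists m1; first by rewrite !mem_cat map_f ?orbT // mem_filter lt_1j.
  by rewrite in_cons mem_rcons mem_head orbT /up m1c cj (ltW lt_1j).
exists (c, pj.2); last by rewrite proj_mem_spine ?mem_middle ?Pj ?m2j // /up cj lexx.
have -> : ((c, pj.2), pj) = orient pj (c, pj.2) by rewrite orient_down // /up cj lexx.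
by rewrite mem_cat; apply/orP; left; apply/mapP; exists pj; rewrite // mem_middle Pj m2j.
Qed.

Lemma spine_crossing_path pi pj : pi \in P -> pj \in P -> up pi pj ->
  pi.1 <= c <= pj.1 -> pi.2 <= m1.2 -> m2.2 <= pj.2 ->
  exists w, [/\ is_dpath spine_edges pi w, last pi w = pj & pcost pi w = d1 pi pj].
Proof.
move=> Pi Pj up_ij /andP [ic cj] im1 m2j.
have [u in_u [u_sp up_iu u2]] := spine_entry Pi ic im1.
have [v in_v [v_sp up_vj v2]] := spine_exit Pj cj m2j.
have uv : u.2 <= v.2.
  by rewrite u2 v2 ge_max !le_min im1 m21 m2j (andP up_ij).2.
have [w [pw lw cw]] := vertical_chain_path spine_on_line spine_sorted u_sp v_sp uv.
exists (u :: rcons w pj); split.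
- rewrite /is_dpath /= in_u rcons_path lw in_v andbT.
  by apply: sub_path pw => x y xy; rewrite !mem_cat xy orbT.
- by rewrite /= last_rcons.
rewrite /= -cats1 pcost_cat lw cw /= addr0 !d1_up //.
by rewrite (spine_on_line u_sp) (spine_on_line v_sp); lra.
Qed.
End Spine.

Lemma Gprime_monotone_path (O : set point) P V E :
  convex_region O -> Gprime O P V E -> (forall p, p \in P -> bd O p) ->
  forall pi pj, pi \in P -> pj \in P -> up pi pj ->
  exists w, [/\ is_dpath E pi w, last pi w = pj & pcost pi w = d1 pi pj].
Proof.
move=> cvxO G; elim: G => {P V E} [P sP | P c m1 m2 s VL VR EL ER _ _ _
  bm1 m1c top bm2 m2c bot s_mid s_srt _ IHL _ IHR] bdP pi pj Pi Pj up_ij.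
  case: P sP bdP Pi Pj => [|a [|b l]] //= _ _; rewrite !inE => /eqP -> /eqP ->.
  by exists [::]; rewrite /= /d1 !subrr normr0 addr0.
have [jc|cj] := ltP pj.1 c.
  have ic : pi.1 < c := le_lt_trans (andP up_ij).1 jc.
  have [|||w [pw lw cw]] := IHL _ pi pj _ _ up_ij.
  - by move=> p; rewrite mem_filter => /andP [_ /bdP].
  - by rewrite mem_filter ic.
  - by rewrite mem_filter jc.
  by exists w; split => //; apply: sub_path pw => x y xy; rewrite !mem_cat xy !orbT.
have [ci|ic] := ltP c pi.1.
  have lt_cj : c < pj.1 := lt_le_trans ci (andP up_ij).1.
  have [|||w [pw lw cw]] := IHR _ pi pj _ _ up_ij.
  - by move=> p; rewrite mem_filter => /andP [_ /bdP].
  - by rewrite mem_filter ci.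
  - by rewrite mem_filter lt_cj.
  by exists w; split => //; apply: sub_path pw => x y xy; rewrite !mem_cat xy !orbT.
have [im1 m2j] := straddle_bd_bounds cvxO (bdP _ Pi) (bdP _ Pj)
  (introT andP (conj ic cj)) (andP up_ij).2 top bot.
have [w [pw lw cw]] := spine_crossing_path m1c m2c (top m2 bm2 m2c) s_mid s_srt
  Pi Pj up_ij (introT andP (conj ic cj)) im1 m2j.
exists w; split => //; apply: sub_path pw => x y.
by rewrite /spine_edges /spine !mem_cat => /or4P [] ->; rewrite ?orbT.
Qed.
End Plane.

Lemma mul_trunc_log_half a n : (a <= n./2)%N ->
  (a * (trunc_log 2 a).+1 <= a * trunc_log 2 n)%N.
Proof.
case: a => [//|a] han; rewrite leq_mul2l /=; apply: trunc_log_max => //.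
have := trunc_logP (isT : (1 < 2)%N) (isT : (0 < a.+1)%N).
have := odd_double_half n; rewrite expnS; lia.
Qed.

Lemma halves_trunc_log a b n : (a <= n./2)%N -> (b <= n./2)%N ->
  (a * (trunc_log 2 a).+1 + b * (trunc_log 2 b).+1 <= n * trunc_log 2 n)%N.
Proof.
move=> han hbn; apply: leq_trans (leq_add (mul_trunc_log_half han)
  (mul_trunc_log_half hbn)) _.
by rewrite -mulnDl leq_mul2r; have := odd_double_half n; lia.
Qed.

Lemma Gprime_size (R : realType) (O : set (R * R)) P V E : Gprime O P V E ->
  (size V <= 5 * (size P * (trunc_log 2 (size P)).+1))%N /\
  (size E <= 5 * (size P * (trunc_log 2 (size P)).+1))%N.
Proof.
move=> G; elim: G => {P V E} [P sP | P c m1 m2 s VL VR EL ER n_ge2 hl hr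
  _ _ _ _ _ _ s_mid _ _ [VL_le EL_le] _ [VR_le ER_le]].
  by rewrite /= mulnS; split; lia.
rewrite /consec !size_cat !size_map /= size_zip /= size_rcons size_map mulnS.
have s_le : (size s <= size P)%N by rewrite (perm_size s_mid) size_filter count_size.
have filter_le (a : pred (R * R)) : (size (seq.filter a P) <= size P)%N.
  by rewrite size_filter count_size.
have := filter_le (fun p => (m1.2 < p.2)%R); have := filter_le (fun p => (p.2 < m2.2)%R).
move: (halves_trunc_log hl hr) VL_le EL_le VR_le ER_le.
move: (size (leftof c P) * _)%N (size (rightof c P) * _)%N (size P * _)%N.
by move=> xL xR nT; split; lia.
Qed.

Theorem lemma5 (R : realType) :
  (forall (O : set (R * R)) (P V : seq (R * R)) (E : seq ((R * R) * (R * R))),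
     convex_region O -> uniq P -> (forall p, p \in P -> bd O p) ->
     Gprime O P V E ->
     forall pi pj, pi \in P -> pj \in P -> up pi pj ->
       exists w : seq (R * R),
         [/\ is_dpath E pi w, last pi w = pj & pcost pi w = d1 pi pj])
  /\
  (exists C : nat,
     forall (O : set (R * R)) (P V : seq (R * R)) (E : seq ((R * R) * (R * R))),
       convex_region O -> uniq P -> (forall p, p \in P -> bd O p) ->
       Gprime O P V E -> (2 <= size P)%N ->
       (size V <= C * (size P * trunc_log 2 (size P)))%N /\
       (size E <= C * (size P * trunc_log 2 (size P)))%N).
Proof.
split.
  (* The points of P need not be distinct. *)
  by move=> O P V E cvxO _ bdP G; exact: Gprime_monotone_path cvxO G bdP.
exists 10%N => O P V E _ _ _ G n_ge2.
have T_ge1 : (1 <= trunc_log 2 (size P))%N by apply: trunc_log_max.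
have := leq_pmulr (size P) T_ge1; have [] := Gprime_size G; rewrite mulnS.
by move: (size P * _)%N => nT; lia.
Qed.
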